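(* Let $Q$ be a quadrangulation with a distinguished vertex $s_0$ on its outer face. Then there is a bijection between the $2$-orientations of $Q$ and the strong labelings of $Q$ (with special vertex $s_0$).
   Context: A quadrangulation is a simple plane graph with at least four vertices all of whose faces (including the outer face) are bounded by $4$-cycles; it is bipartite. Color the vertices properly black and white so that $s_0$ is black, and let $s_1$ be the other black vertex on the outer face (the one opposite to $s_0$). An angle is an incidence of a vertex with a face. A strong labeling of $Q$ is a map from the angles of $Q$ to $\{0,1\}$ such that: (G0) all angles at $s_i$ are labeled $i$; (G1) for each vertex $v\notin\{s_0,s_1\}$ the labels around $v$ form one non-empty cyclic interval of $1$s and one non-empty cyclic interval of $0$s; (G2) for each edge, the two labels on the two sides of the edge coincide at one endpoint and differ at the other; (G3) the labels in each bounded face, read cyclically, are $0,0,1,1$, and reading the labels of the outer face in clockwise order starting at $s_0$ they are $0,0,1,1$. A $2$-orientation of $Q$ is an orientation of its edges in which every vertex other than $s_0,s_1$ has outdegree exactly $2$. *)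

(* Plane graphs are encoded as combinatorial maps (rotation
   systems); planarity is expressed through Euler's formula. *)
From mathcomp Require Import all_boot.
From mathcomp Require Import all_fingroup.
Set Implicit Arguments. Unset Strict Implicit. Unset Printing Implicit Defensive.

Section Maps.
Variables (V D : finType) (tail : D -> V) (alpha sigma : {perm D}).

(* Darts d : D; [tail d] is the vertex d leaves from; [alpha] reverses a dart
   (edge = pair {d, alpha d}); [sigma] is the COUNTERCLOCKWISE successor of a
   dart around its tail vertex.  The face to the LEFT of a dart is traversed by
   [phi d := sigma^-1 (alpha d)]; bounded faces are hence traversed
   counterclockwise and the outer face clockwise. *)
Definition phi (d : D) : D := (sigma^-1)%g (alpha d).

(* Corner (angle) of dart d: the angle at [tail d] between d and [sigma d];
   it lies in the face (phi-orbit) of d. *)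

Definition face_walk (d : D) : seq D := [:: d; phi d; phi (phi d); phi (phi (phi d))].

Definition quadrangulation : Prop :=
  (forall d, alpha (alpha d) = d) /\ (forall d, alpha d <> d) /\
  (forall d, tail (sigma d) = tail d) /\
  (forall d e, tail d = tail e -> exists k, iter k sigma d = e) /\
  (forall v, exists d, tail d = v) /\
  (* simple: no loops, no multiple edges *)
  (forall d, tail (alpha d) <> tail d) /\
  (forall d e, tail d = tail e -> tail (alpha d) = tail (alpha e) -> d = e) /\
  (forall d e, connect [rel x y | (y == sigma x) || (y == alpha x)] d e) /\
  (* plane (genus 0): Euler's formula V - E + F = 2 *)
  (#|V| + fcard phi (@predT D) = #|D|./2 + 2)%N /\
  (4 <= #|V|)%N /\
  (forall d, iter 4 phi d = d /\ uniq (map tail (face_walk d))).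

Variable d0 : D.
(* d0 is the dart of the outer face leaving s0; the outer face is the phi-orbit
   of d0, and s1 is the vertex opposite to s0 on it. *)
Definition s0 : V := tail d0.
Definition s1 : V := tail (phi (phi d0)).
Definition outer (d : D) : Prop := exists k, iter k phi d0 = d.

(* 2-orientations: O is the set of darts oriented forward (one per edge). *)
Definition is_two_orientation (O : {set D}) : Prop :=
  (forall d, (d \in O) = (alpha d \notin O)) /\
  (forall v, v <> s0 -> v <> s1 -> #|[set d in O | tail d == v]| = 2%N).

Definition two_orientation := {O : {set D} | is_two_orientation O}.

(* Strong labelings: labels of angles (= corners = darts) in {0,1},
   encoded as bool (false = 0, true = 1). *)
Definition is_strong_labeling (lab : {ffun D -> bool}) : Prop :=
  (forall d, tail d = s0 -> lab d = false) /\
  (forall d, tail d = s1 -> lab d = true) /\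
  (forall v, v <> s0 -> v <> s1 ->
     exists d k m, [/\ tail d = v, (0 < k)%N, (0 < m)%N,
       (k + m)%N = #|[set e | tail e == v]| &
       [seq lab (iter i sigma d) | i <- iota 0 (k + m)]
         = nseq k true ++ nseq m false]) /\
  (* G2: the two angles at tail d on the two sides of edge {d, alpha d} are
     the corners of (sigma^-1 d) and d *)
  (forall d, (lab d == lab ((sigma^-1)%g d))
              (+) (lab (alpha d) == lab ((sigma^-1)%g (alpha d)))) /\
  (forall d, ~ outer d ->
     exists k, (k < 4)%N /\ rot k (map lab (face_walk d)) = [:: false; false; true; true]) /\
  (* G3, outer face read clockwise from s0 *)
  map lab (face_walk d0) = [:: false; false; true; true].

Definition strong_labeling := {lab : {ffun D -> bool} | is_strong_labeling lab}.

End Maps.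

From mathcomp Require Import all_boot all_fingroup all_algebra zify ring.
From Stdlib Require Import ClassicalEpsilon ProofIrrelevance.
Set Implicit Arguments. Unset Strict Implicit. Unset Printing Implicit Defensive.

Import GRing.Theory.

(* A strong labeling orients every edge away from the endpoint at which the
   labels on its two sides differ; (G1) makes this a 2-orientation and the
   labeling is recovered from it, because two strong labelings with the same
   orientation differ by a function that is constant around vertices and
   across faces, hence on each colour class, hence zero by (G0).
   Conversely, in a 2-orientation every vertex has even out-degree (0 at s0
   and s1, by Euler's formula), so the rule "labels flip exactly across
   outgoing darts" fixes the labels around each vertex up to one flip c(v).
   The face condition (G3) becomes a linear system over F_2 for c, with one
   equation per diagonal of a face.  Its matrix A and the matrix B of the
   crossing diagonals satisfy AB = 0, since every edge lies on two faces, and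
   Euler's formula gives rank A + rank B = number of diagonals, so im A = ker B.
   The right-hand side lies in ker B because out-degrees are even, and the
   flips that are constant on each colour class adjust the outer face. *)

Section F2.
Local Open Scope ring_scope.
Implicit Types x y : 'F_2.

Lemma F2_addxx x : x + x = 0.
Proof. exact/addrr_pchar2/pchar_Fp. Qed.

Lemma F2_add0_eq x y : x + y = 0 -> x = y.
Proof. by move/eqP; rewrite addr_eq0 oppr_pchar2 ?pchar_Fp // => /eqP. Qed.

Lemma F2_eq1D x y : (x + y == 1) = (x == 1) (+) (y == 1).
Proof. by case: x y => [[|[|//]] ?] [[|[|//]] ?]. Qed.

Lemma F2_nat_eq1 (b : bool) : (b%:R == 1 :> 'F_2) = b.
Proof. by case: b. Qed.

End F2.

Lemma map_iota_nseq_cat (f : nat -> bool) k m :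
  [seq f i | i <- iota 0 (k + m)] = nseq k true ++ nseq m false <->
  (forall i, i < k + m -> f i = (i < k)).
Proof.
have nthE i : i < k + m -> nth false (nseq k true ++ nseq m false) i = (i < k).
  by move=> lt_i; rewrite nth_cat size_nseq !nth_nseq; case: ltnP => //; case: ifP; lia.
split=> [E i lt_i | H].
  by rewrite -nthE // -E (nth_map 0) ?size_iota // nth_iota.
apply: (eq_from_nth (x0 := false)) => [|i].
  by rewrite size_map size_iota size_cat !size_nseq.
by rewrite size_map size_iota => lt_i; rewrite nthE // (nth_map 0) ?size_iota // nth_iota // H.
Qed.

Lemma card_involution_split (T : finType) (f : T -> T) (S : {set T}) :
  involutive f -> (forall x, (x \in S) = (f x \notin S)) -> #|S| * 2 = #|T|.
Proof.
move=> fK Sf; rewrite -(cardsC S) muln2 -addnn; congr (_ + _).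
rewrite -(card_preimset S (inv_inj fK)); apply: eq_card => x.
by rewrite !inE Sf fK.
Qed.

Lemma traject_iota (T : Type) (f : T -> T) x n :
  traject f x n = [seq iter i f x | i <- iota 0 n].
Proof.
elim: n => // n IH.
by rewrite trajectSr IH -addn1 iotaD map_cat cats1.
Qed.

Lemma big_ord_cyclic_shift (R : Type) (idx : R) (op : Monoid.com_law idx)
    (g : nat -> R) n :
  g n = g 0 -> \big[op/idx]_(i < n) g i.+1 = \big[op/idx]_(i < n) g i.
Proof.
case: n => [|n] gn; first by rewrite !big_ord0.
by rewrite big_ord_recr big_ord_recl /= gn Monoid.mulmC.
Qed.

Lemma sum_enum_val_indicator (R : pzSemiRingType) (T : finType) (g : 'I_#|T| -> R) a :
  (\sum_i g i * (enum_val i == a)%:R = g (enum_rank a))%R.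
Proof.
rewrite (bigD1 (enum_rank a)) //= enum_rankK eqxx mulr1 big1 ?addr0 // => i ne_ia.
suff /negbTE-> : enum_val i != a by rewrite mulr0.
by apply: contra ne_ia => /eqP <-; rewrite enum_valK.
Qed.

Section PermOrbit.
Variables (T : finType) (s : {perm T}).
Local Notation order := (fingraph.order s).

Lemma eq_iter_perm x i j : i < order x -> j < order x ->
  (iter i s x == iter j s x) = (i == j).
Proof.
move=> lt_i lt_j; apply/eqP/eqP => [E|-> //].
by rewrite -(findex_iter lt_i) -(findex_iter lt_j) E.
Qed.

Lemma iter_order_perm x : iter (order x) s x = x.
Proof. exact: iter_order (@perm_inj _ s) x. Qed.

Lemma permV_iter_order x : (s^-1)%g x = iter (order x).-1 s x.
Proof.
by have := iter_order_perm x; rewrite -(orderSpred s x) /= => {1}<-; rewrite permK.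
Qed.

Lemma big_perm_orbit (R : Type) (idx : R) (op : Monoid.com_law idx) (F : T -> R) x :
  \big[op/idx]_(i < order x) F (iter i s x) = \big[op/idx]_(y | fconnect s x y) F y.
Proof.
rewrite -(big_mkord xpredT (fun i => F (iter i s x))).
rewrite -(big_map (fun i => iter i s x) xpredT F) -traject_iota subn0.
rewrite big_uniq ?orbit_uniq //; apply: eq_bigl => y.
by rewrite -fconnect_orbit.
Qed.

End PermOrbit.

Section ExactSystem.
Variable F : fieldType.
Local Open Scope ring_scope.

Lemma mxrank_kermx_mul_inj m n q (A : 'M[F]_(m, n)) (E : 'M_(m, q)) :
  (forall u : 'rV_m, u *m A = 0 -> u *m E = 0 -> u = 0) ->
  \rank (kermx A *m E) = \rank (kermx A).
Proof.
move=> inj; apply/mxrank_injP/eqP/row_matrixP => i; rewrite row0.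
by apply: inj; apply/sub_kermxP; apply: submx_trans (row_sub i _) _;
  [apply: capmxSl | apply: capmxSr].
Qed.

Lemma kernel_inj_rank_ge m n q (A : 'M[F]_(m, n)) (E : 'M_(m, q)) :
  (forall u : 'rV_m, u *m A = 0 -> u *m E = 0 -> u = 0) -> (m <= \rank A + q)%N.
Proof.
move/mxrank_kermx_mul_inj => rkKE.
by have := rank_leq_col (kermx A *m E); rewrite rkKE mxrank_ker; lia.
Qed.

(* The rank bound forces im A = ker B, and the injectivity hypothesis makes
   the kernel of A project onto all of F^q through E. *)
Lemma exact_system_solvable m n p q (A : 'M[F]_(m, n)) (B : 'M_(n, p))
    (E : 'M_(m, q)) (b : 'rV_n) (t : 'rV_q) :
  A *m B = 0 -> (forall u : 'rV_m, u *m A = 0 -> u *m E = 0 -> u = 0) ->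
  (n + q <= m + \rank B)%N -> b *m B = 0 ->
  exists c : 'rV_m, c *m A = b /\ c *m E = t.
Proof.
move=> AB0 injAE rkB bB0.
have rkKE := mxrank_kermx_mul_inj injAE.
have le_kE := kernel_inj_rank_ge injAE.
have sAkB : (A <= kermx B)%MS by apply/sub_kermxP.
have le_AkB := mxrankS sAkB; rewrite mxrank_ker in le_AkB.
have le_Bn := rank_leq_row B.
have rkA : \rank A = \rank (kermx B) by rewrite mxrank_ker; lia.
have /submxP [c1 def_b] : (b <= A)%MS.
  have := (mxrank_leqif_eq sAkB).2; rewrite rkA eqxx => /esym/andP [_ skBA].
  by apply: submx_trans skBA; apply/sub_kermxP.
have /submxP [w def_t] : (t - c1 *m E <= kermx A *m E)%MS.
  by apply: submx_full; rewrite -col_leq_rank rkKE mxrank_ker; lia.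
exists (c1 + w *m kermx A); rewrite !mulmxDl -!(mulmxA w).
by rewrite mulmx_ker mulmx0 addr0 -def_b -def_t addrC subrK.
Qed.

End ExactSystem.

Section Quadrangulation.
Variables (V D : finType) (tail : D -> V) (alpha sigma : {perm D}) (d0 : D).
Hypothesis HQ : quadrangulation tail alpha sigma.

Local Notation ph := (phi alpha sigma).
Local Notation opp d := (ph (ph d)).
Local Notation order := (fingraph.order sigma).

Lemma alphaK : involutive alpha.
Proof. by case: HQ. Qed.

Lemma tail_sigma d : tail (sigma d) = tail d.
Proof. by case: HQ => _ [_ [tail_sigma _]]. Qed.

Lemma fconnect_sigma_tail d e : fconnect sigma d e = (tail e == tail d).
Proof.
apply/idP/eqP => [/iter_findex <-|].
  by elim: (findex _ _ _) => //= k <-; rewrite tail_sigma.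
by case: HQ => _ [_ [_ [tail_conn _]]] /esym/tail_conn [k <-]; apply: fconnect_iter.
Qed.

Lemma tail_surj v : exists d, tail d = v.
Proof. by case: HQ => _ [_ [_ [_ [surj _]]]]. Qed.

Lemma darts_connected d e : connect [rel x y | (y == sigma x) || (y == alpha x)] d e.
Proof. by case: HQ => _ [_ [_ [_ [_ [_ [_ [conn _]]]]]]]. Qed.

Lemma euler_formula : #|V| + fcard ph predT = #|D|./2 + 2.
Proof. by case: HQ => _ [_ [_ [_ [_ [_ [_ [_ [euler _]]]]]]]]. Qed.

Lemma four_le_card_vertices : 4 <= #|V|.
Proof. by case: HQ => _ [_ [_ [_ [_ [_ [_ [_ [_ [le4 _]]]]]]]]]. Qed.

Lemma face_quad d : iter 4 ph d = d /\ uniq (map tail (face_walk alpha sigma d)).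
Proof. by case: HQ => _ [_ [_ [_ [_ [_ [_ [_ [_ [_ faces]]]]]]]]]. Qed.

Lemma tail_iter_sigma k d : tail (iter k sigma d) = tail d.
Proof. by apply/eqP; rewrite -fconnect_sigma_tail fconnect_iter. Qed.

Lemma tail_phi d : tail (ph d) = tail (alpha d).
Proof. by rewrite -[in RHS](permKV sigma (alpha d)) tail_sigma. Qed.

Lemma oppK d : opp (opp d) = d.
Proof. by have [] := face_quad d. Qed.

Lemma phi_alpha_sigma d : ph (alpha (sigma d)) = d.
Proof. by rewrite /phi alphaK permK. Qed.

Lemma phi_opp d : ph (opp d) = alpha (sigma d).
Proof. by rewrite -{1}(phi_alpha_sigma d) oppK. Qed.

Lemma tail_opp_neq d : tail (opp d) != tail d.
Proof.
have [_] := face_quad d; rewrite /face_walk /= !inE.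
by case/and4P => /norP [_ /norP [ne_d _]] _ _ _; rewrite eq_sym.
Qed.

Lemma sigma_opp_invariant_const (T : eqType) (Y : D -> T) :
  (forall x, Y (sigma x) = Y x) -> (forall x, Y (opp x) = Y x) ->
  Y (alpha d0) = Y d0 -> forall x, Y x = Y d0.
Proof.
move=> Y_sigma Y_opp Y_alpha x.
have Y_phi y : Y (ph y) = Y (alpha y) by rewrite -[in RHS](permKV sigma (alpha y)) Y_sigma.
pose P d := (Y d == Y d0) && (Y (alpha d) == Y d0).
have P_step y z : (z == sigma y) || (z == alpha y) -> P y -> P z.
  case/orP => /eqP-> /andP [/eqP Py /eqP Pay]; last by rewrite /P alphaK Py Pay eqxx.
  by rewrite /P Y_sigma Py -[in Y (alpha _)]Y_opp phi_alpha_sigma Y_phi Pay !eqxx.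
suff /andP [/eqP //] : P x.
have /connectP [p p_path ->] := darts_connected d0 x.
have : P d0 by rewrite /P Y_alpha eqxx.
by elim: p d0 p_path => //= z p IH y /andP [yz p_path] /(P_step _ _ yz); apply: IH.
Qed.

Lemma order_phi d : fingraph.order ph d = 4.
Proof.
have [_ uniq_tails] := face_quad d.
rewrite (@order_cycle _ ph (face_walk alpha sigma d)) ?inE ?eqxx //.
  by rewrite /face_walk /= !eqxx /= oppK eqxx.
exact: map_uniq uniq_tails.
Qed.

Lemma card_darts : #|D| = 4 * #|V| - 8.
Proof.
have ph_inj : injective ph.
  by move=> x y /(congr1 (fun z => opp (ph z))); rewrite !oppK.
have cardD : #|D| = fcard ph predT * 4.
  by rewrite fcard_order_set //; apply/subsetP => x _; rewrite inE /= order_phi.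
have half : (fcard ph predT * 4)./2 = fcard ph predT * 2.
  by rewrite -[4]/(2 * 2) mulnA muln2 doubleK.
have := euler_formula; have := four_le_card_vertices; rewrite cardD half; lia.
Qed.

Definition outdeg (O : {set D}) v := #|[set d in O | tail d == v]|.

Lemma sum_outdeg O : \sum_v outdeg O v = #|O|.
Proof.
rewrite -sum1_card (partition_big tail predT) //=; apply: eq_bigr => v _.
by rewrite sum1dep_card.
Qed.

Lemma outdeg_poles O : is_two_orientation tail alpha sigma d0 O ->
  outdeg O (tail d0) = 0 /\ outdeg O (tail (opp d0)) = 0.
Proof.
case=> O_alpha deg2.
have cardO : #|O| * 2 = #|D| := card_involution_split alphaK O_alpha.
have ne_poles := tail_opp_neq d0.
have sumO := sum_outdeg O.
have cardV : \sum_(v : V) 1 = #|V| by rewrite sum1_card.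
rewrite (bigD1 (tail d0)) // (bigD1 (tail (opp d0))) /= ?ne_poles // in sumO.
rewrite (bigD1 (tail d0)) // (bigD1 (tail (opp d0))) /= ?ne_poles // in cardV.
rewrite (eq_bigr (fun _ => 1 + 1)) in sumO => [|v /andP [/eqP ? /eqP ?]]; last exact: deg2.
rewrite big_split /= in sumO; set k := \sum_(v | _) 1 in sumO cardV.
clearbody k; have := card_darts; rewrite -cardO -cardV -sumO; lia.
Qed.

Lemma order_sigma_card d : order d = #|[set e | tail e == tail d]|.
Proof. by apply: eq_card => e; rewrite inE -fconnect_sigma_tail. Qed.

Lemma face_walk_iter d k : iter k ph d \in face_walk alpha sigma d.
Proof.
elim: k => [|k IH] /=; first by rewrite inE eqxx.
by move: IH; rewrite /face_walk !inE => /or4P [] /eqP ->; rewrite ?oppK eqxx ?orbT.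
Qed.

Local Notation strong := (is_strong_labeling tail alpha sigma d0).

Lemma strong_labeling_opp lab : strong lab -> forall x, lab (opp x) = ~~ lab x.
Proof.
case=> _ [_ [_ [_ [G3 G3_outer]]]] x.
have [x_outer | x_inner] := boolP (x \in face_walk alpha sigma d0).
  move: G3_outer x_outer; rewrite /face_walk /= !inE => -[l0 l1 l2 l3].
  by case/or4P => /eqP ->; rewrite ?oppK ?l0 ?l1 ?l2 ?l3.
have [k [lt_k4]] : exists k, k < 4 /\
    rot k (map lab (face_walk alpha sigma x)) = [:: false; false; true; true].
  by apply: G3 => -[j x_j]; move: x_inner; rewrite -x_j face_walk_iter.
rewrite /face_walk /=; move: (lab x) (lab (ph x)) (lab (opp x)) (lab (ph (opp x))).
by case: k lt_k4 => [|[|[|[|//]]]] _ [] [] [] [].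
Qed.

Definition labeling_orientation (lab : {ffun D -> bool}) : {set D} :=
  [set d | lab d != lab ((sigma^-1)%g d)].

Lemma labeling_orientation_two lab : strong lab ->
  is_two_orientation tail alpha sigma d0 (labeling_orientation lab).
Proof.
case=> _ [_ [G1 [G2 _]]]; split=> [d | v ne_s0 ne_s1].
  by move: (G2 d); rewrite !inE; case: (lab d == _); case: (lab (alpha d) == _).
have [d [k [m [<- k_gt0 m_gt0 order_d pattern]]]] := G1 v ne_s0 ne_s1.
rewrite -order_sigma_card in order_d.
have lab_iter := (map_iota_nseq_cat _ _ _).1 pattern.
have lt_k : k < order d by lia.
suff -> : [set e in labeling_orientation lab | tail e == tail d] = [set d; iter k sigma d].
  by rewrite cards2 eq_sym -[X in _ != X]/(iter 0 sigma d) eq_iter_perm //; lia.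
apply/setP => e; rewrite !inE.
have [te | ne_te] := eqVneq (tail e) (tail d); last first.
  by rewrite andbF; apply/esym/norP; split; apply: contraNneq ne_te => ->;
    rewrite ?tail_iter_sigma.
have fc : fconnect sigma d e by rewrite fconnect_sigma_tail te.
rewrite andbT -(iter_findex fc); have := findex_max fc.
case: (findex _ _ _) => [|i] lt_i.
  by rewrite /= eqxx permV_iter_order -order_d (lab_iter 0) ?lab_iter ?k_gt0; lia.
by rewrite (@eq_iter_perm _ _ d i.+1 0) ?eq_iter_perm //= permK -iterS !lab_iter; lia.
Qed.

Lemma labeling_orientation_inj lab1 lab2 : strong lab1 -> strong lab2 ->
  labeling_orientation lab1 = labeling_orientation lab2 -> lab1 = lab2.
Proof.
move=> S1 S2 /setP E; apply/ffunP => x.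
pose Y z := lab1 z (+) lab2 z.
have Y_sigma z : Y (sigma z) = Y z.
  move: (E (sigma z)); rewrite !inE permK /Y.
  by do 2!case: (lab1 _); do 2!case: (lab2 _).
have Y_opp z : Y (opp z) = Y z.
  by rewrite /Y !strong_labeling_opp // addbN addNb negbK.
have Y_d0 : Y d0 = false by case: S1 S2 => [l1 _] [l2 _]; rewrite /Y l1 ?l2.
have Y_alpha : Y (alpha d0) = Y d0.
  rewrite -[alpha d0](permKV sigma) Y_sigma Y_d0.
  case: S1 S2 => _ [_ [_ [_ [_ F1]]]] [_ [_ [_ [_ [_ F2]]]]].
  by move: F1 F2; rewrite /face_walk /Y /= => -[_ -> _ _] [_ -> _ _].
have := sigma_opp_invariant_const Y_sigma Y_opp Y_alpha x; rewrite Y_d0 /Y.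
by case: (lab1 x); case: (lab2 x).
Qed.

Section LocalRules.
Variables (O : {set D}) (lab : {ffun D -> bool}).
Hypothesis O_two : is_two_orientation tail alpha sigma d0 O.
Hypothesis lab_sigma : forall d, lab (sigma d) = lab d (+) (sigma d \in O).
Hypothesis lab_opp : forall d, lab (opp d) = ~~ lab d.
Hypothesis lab_d0 : lab d0 = false.
Hypothesis lab_phi_d0 : lab (ph d0) = false.

Lemma lab_outdeg0 y d : outdeg O (tail y) = 0 -> tail d = tail y -> lab d = lab y.
Proof.
move/cards0_eq/setP => no_out /eqP; rewrite -fconnect_sigma_tail => /iter_findex <-.
elim: (findex _ _ _) => //= k IH; rewrite lab_sigma IH.
have := no_out (sigma (iter k sigma y)).
by rewrite !inE tail_sigma tail_iter_sigma eqxx andbT => ->; rewrite addbF.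
Qed.

Lemma fconnect_out_pair d e : [set x in O | tail x == tail d] = [set d; e] -> fconnect sigma d e.
Proof.
move/setP/(_ e); rewrite !inE eqxx orbT fconnect_sigma_tail.
by case/andP.
Qed.

Lemma lab_outdeg2 d e : d != e -> [set x in O | tail x == tail d] = [set d; e] ->
  forall i, i < order d ->
  lab (iter i sigma d) = if i < findex sigma d e then lab d else ~~ lab d.
Proof.
move=> ne_de out_d; have fc := fconnect_out_pair out_d.
have lt_k := findex_max fc; have def_e := iter_findex fc.
have k_gt0 : 0 < findex sigma d e by rewrite lt0n findex_eq0.
have in_O j : 0 < j < order d -> (iter j sigma d \in O) = (j == findex sigma d e).
  case/andP=> j_gt0 lt_j; move/setP/(_ (iter j sigma d)): out_d.
  rewrite !inE tail_iter_sigma eqxx andbT => ->.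
  by rewrite -{1}def_e (@eq_iter_perm _ _ d j 0) ?eq_iter_perm // -[j == 0]negbK -lt0n j_gt0.
elim=> [|i IH] lt_i; first by rewrite k_gt0.
rewrite iterS lab_sigma -iterS in_O ?lt_i // IH ?(ltnW lt_i) //.
by case: (ltngtP i.+1 (findex sigma d e)); rewrite ?addbF ?addbT.
Qed.

Lemma lab_interval d e : d != e -> [set x in O | tail x == tail d] = [set d; e] -> lab d ->
  exists d' k m, [/\ tail d' = tail d, 0 < k, 0 < m,
    k + m = #|[set x | tail x == tail d]| &
    [seq lab (iter i sigma d') | i <- iota 0 (k + m)] = nseq k true ++ nseq m false].
Proof.
move=> ne_de out_d lab_d; have fc := fconnect_out_pair out_d.
have lt_k := findex_max fc.
exists d, (findex sigma d e), (order d - findex sigma d e); split=> //.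
- by rewrite lt0n findex_eq0.
- by rewrite subn_gt0.
- by rewrite subnKC ?(ltnW lt_k) // order_sigma_card.
apply/map_iota_nseq_cat => i lt_i; rewrite (lab_outdeg2 ne_de out_d); last lia.
by rewrite lab_d; case: ifP.
Qed.

Lemma lab_intervals v : v <> s0 tail d0 -> v <> s1 tail alpha sigma d0 ->
  exists d k m, [/\ tail d = v, 0 < k, 0 < m, k + m = #|[set e | tail e == v]| &
    [seq lab (iter i sigma d) | i <- iota 0 (k + m)] = nseq k true ++ nseq m false].
Proof.
move=> ne_s0 ne_s1; case: O_two => _ deg2.
have /cards2P [a [b [ne_ab out_v]]] : #|[set d in O | tail d == v]| == 2 by rewrite deg2.
have ta : tail a = v by move/setP/(_ a): out_v; rewrite !inE eqxx => /andP [_ /eqP].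
rewrite -ta in out_v *.
have [lab_a | /negPf lab_a] := boolP (lab a); first exact: lab_interval out_v lab_a.
have fc := fconnect_out_pair out_v.
have tb : tail b = tail a by apply/eqP; rewrite -fconnect_sigma_tail.
rewrite -tb; apply: (lab_interval (e := a)); first by rewrite eq_sym.
  by rewrite tb setUC.
by have := lab_outdeg2 ne_ab out_v (findex_max fc); rewrite iter_findex // ltnn lab_a.
Qed.

Lemma strong_of_local_rules : strong lab.
Proof.
have [out_s0 out_s1] := outdeg_poles O_two.
case: O_two => O_alpha _.
split; first by move=> d /(lab_outdeg0 out_s0) ->.
split; first by move=> d /(lab_outdeg0 out_s1) ->; rewrite lab_opp lab_d0.
split; first exact: lab_intervals.
split.
  move=> d; rewrite -{1}(permKV sigma d) lab_sigma permKV.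
  rewrite -{1}(permKV sigma (alpha d)) lab_sigma permKV O_alpha.
  by case: (lab _); case: (lab _); case: (alpha d \in O).
split; last by rewrite /face_walk /= !lab_opp lab_d0 lab_phi_d0.
move=> d _; rewrite /face_walk /= !lab_opp.
by case: (lab d); case: (lab (ph d)); [exists 2 | exists 1 | exists 3 | exists 0].
Qed.

Lemma labeling_orientation_of_local_rules : labeling_orientation lab = O.
Proof.
apply/setP => d; rewrite inE -{1}(permKV sigma d) lab_sigma permKV.
by case: (lab _); case: (d \in O).
Qed.

End LocalRules.

Section Construction.
Variable O : {set D}.
Hypothesis O_two : is_two_orientation tail alpha sigma d0 O.
Local Open Scope ring_scope.

Local Notation root := (froot sigma).

Definition outF d : 'F_2 := (d \in O)%:R.

Lemma outdeg_even v : (outdeg O v)%:R = 0 :> 'F_2.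
Proof.
have [out_s0 out_s1] := outdeg_poles O_two.
have [->|ne_s0] := eqVneq v (tail d0); first by rewrite out_s0.
have [->|ne_s1] := eqVneq v (tail (opp d0)); first by rewrite out_s1.
by case: O_two => _ deg2; rewrite /outdeg deg2 ?pchar_Fp_0 //; apply/eqP.
Qed.

Lemma sum_outF_vertex v : \sum_(d | tail d == v) outF d = 0.
Proof.
rewrite -natr_sum -(outdeg_even v) /outdeg -sum1dep_card; congr (_%:R).
rewrite big_mkcond [RHS]big_mkcond /=; apply: eq_bigr => d _.
by case: (d \in O); case: (tail d == v).
Qed.

(* The label forced at angle d when the angle at the root of its vertex is
   labeled 0. *)
Definition out_parity d : 'F_2 :=
  \sum_(i < findex sigma (root d) d) outF (iter i.+1 sigma (root d)).

Lemma out_parity_sigma d : out_parity (sigma d) = out_parity d + outF (sigma d).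
Proof.
have sym_sigma : connect_sym (frel sigma) := fconnect_sym (@perm_inj _ sigma).
have root_sigma : root (sigma d) = root d.
  by apply/(fingraph.rootP sym_sigma); rewrite sym_sigma fconnect1.
rewrite /out_parity root_sigma; set r := root d.
have fc : fconnect sigma r d by rewrite sym_sigma connect_root.
have lt_k := findex_max fc; have def_d := iter_findex fc.
have [lt_k1 | ge_k1] := ltnP (findex sigma r d).+1 (order r).
  have -> : findex sigma r (sigma d) = (findex sigma r d).+1.
    by rewrite -{1}def_d -iterS findex_iter.
  by rewrite big_ord_recr /= def_d.
have def_k : (findex sigma r d).+1 = order r by apply/anti_leq/andP.
have r_sigma : sigma d = r by rewrite -def_d -iterS def_k iter_order_perm.
rewrite r_sigma findex0 big_ord0.
have : \sum_(i < (findex sigma r d).+1) outF (iter i.+1 sigma r) = 0.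
  rewrite def_k (@big_ord_cyclic_shift _ _ _ (fun i => outF (iter i sigma r))) /=.
    by rewrite big_perm_orbit (eq_bigl _ _ (fconnect_sigma_tail r)) sum_outF_vertex.
  by rewrite iter_order_perm.
by rewrite big_ord_recr /= -iterS def_k iter_order_perm => ->.
Qed.

Definition diag_reps : {set D} := [set d | (enum_rank d < enum_rank (opp d))%N].

Lemma diag_reps_opp d : (d \in diag_reps) = (opp d \notin diag_reps).
Proof.
suff ne_d : enum_rank d != enum_rank (opp d) :> nat.
  by rewrite !inE oppK ltn_neqAle ne_d -leqNgt.
apply/negP => /eqP/val_inj/enum_rank_inj eq_d.
by move: (tail_opp_neq d); rewrite -eq_d eqxx.
Qed.

Lemma card_diag_reps : (#|diag_reps| * 2)%N = #|D|.
Proof. exact: card_involution_split oppK diag_reps_opp. Qed.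

Lemma diag_reps_ind (P : D -> Prop) :
  (forall d, P (opp d) -> P d) -> (forall d, d \in diag_reps -> P d) -> forall d, P d.
Proof.
move=> P_opp P_reps d; have [/P_reps // | d_nrep] := boolP (d \in diag_reps).
by apply/P_opp/P_reps; rewrite diag_reps_opp oppK.
Qed.

Lemma sum_diag_reps (g : D -> 'F_2) : \sum_(d in diag_reps) (g d + g (opp d)) = \sum_d g d.
Proof.
have opp_inj : injective (fun d => opp d) by move=> x y /(congr1 (fun d => opp d)); rewrite !oppK.
rewrite big_split /= [RHS](bigID (mem diag_reps)) /=; congr (_ + _).
by rewrite [RHS](reindex_inj opp_inj); apply: eq_bigl => d; rewrite /= diag_reps_opp.
Qed.

Local Notation nV := #|V|.
Local Notation nH := #|diag_reps|.
Local Notation ev := enum_val.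

Lemma sum_enum_diag_reps (F : D -> 'F_2) : \sum_(j < nH) F (ev j) = \sum_(d in diag_reps) F d.
Proof. by rewrite -(big_enum_val (A := [pred d in diag_reps]) F). Qed.

Definition rv_at (c : 'rV['F_2]_nV) v := c 0 (enum_rank v).

(* Column x of diag_mx is the diagonal {tail x, tail (opp x)} of the face of x,
   column x of codiag_mx^T the crossing diagonal of the same face. *)
Definition diag_mx : 'M['F_2]_(nV, nH) :=
  \matrix_(i, j) ((ev i == tail (ev j))%:R + (ev i == tail (opp (ev j)))%:R).

Definition codiag_mx : 'M['F_2]_(nH, nV) :=
  \matrix_(j, i) ((ev i == tail (ph (ev j)))%:R + (ev i == tail (ph (opp (ev j))))%:R).

Definition pole_mx : 'M['F_2]_(nV, 2) :=
  \matrix_(i, j) (ev i == if j == 0 then tail d0 else tail (alpha d0))%:R.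

Lemma mul_diag_mx c j :
  (c *m diag_mx) 0 j = rv_at c (tail (ev j)) + rv_at c (tail (opp (ev j))).
Proof.
rewrite !mxE; under eq_bigr do rewrite mxE mulrDr.
by rewrite big_split /= !sum_enum_val_indicator.
Qed.

Lemma mul_codiag_mx_tr c j :
  (c *m codiag_mx^T) 0 j = rv_at c (tail (ph (ev j))) + rv_at c (tail (ph (opp (ev j)))).
Proof.
rewrite !mxE; under eq_bigr do rewrite !mxE mulrDr.
by rewrite big_split /= !sum_enum_val_indicator.
Qed.

Lemma mul_pole_mx c j :
  (c *m pole_mx) 0 j = rv_at c (if j == 0 then tail d0 else tail (alpha d0)).
Proof. by rewrite !mxE; under eq_bigr do rewrite mxE; rewrite sum_enum_val_indicator. Qed.

Lemma diag_codiag_mx : diag_mx *m codiag_mx = 0.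
Proof.
(* Both sums below count the edges between ev i and ev k. *)
apply/matrixP => i k; rewrite !mxE; under eq_bigr do rewrite !mxE.
pose at_i x : 'F_2 := (ev i == tail x)%:R; pose at_k x : 'F_2 := (ev k == tail x)%:R.
pose g x := at_i x * (at_k (ph x) + at_k (ph (opp x))).
rewrite (sum_enum_diag_reps (fun x => (at_i x + at_i (opp x)) * (at_k (ph x) + at_k (ph (opp x))))).
rewrite (eq_bigr (fun x => g x + g (opp x))) => [|x _]; last first.
  by rewrite /g oppK mulrDl [at_k (ph x) + _]addrC.
rewrite sum_diag_reps /g; under eq_bigr do rewrite mulrDr; rewrite big_split /=.
have -> : \sum_y at_i y * at_k (ph y) = \sum_y at_i y * at_k (alpha y).
  by apply: eq_bigr => y _; rewrite /at_k tail_phi.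
have -> : \sum_y at_i y * at_k (ph (opp y)) = \sum_y at_i y * at_k (alpha y).
  rewrite [RHS](reindex_inj (@perm_inj _ sigma)) /=.
  by apply: eq_bigr => y _; rewrite phi_opp /at_i tail_sigma.
exact: F2_addxx.
Qed.

Definition parity_defect d : 'F_2 := 1 + out_parity d + out_parity (opp d).

Lemma parity_defect_opp d : parity_defect (opp d) = parity_defect d.
Proof. by rewrite /parity_defect oppK -!addrA [out_parity d + _]addrC. Qed.

Lemma out_parity_alpha d : 1 + out_parity (alpha d) + out_parity (ph d) = outF d.
Proof.
rewrite -[alpha d](permKV sigma) out_parity_sigma permKV -/(ph d).
set p := out_parity (ph d).
have -> : 1 + (p + outF (alpha d)) + p = (p + p) + (1 + outF (alpha d)) by ring.
case: O_two => O_alpha _; rewrite F2_addxx add0r /outF (O_alpha d).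
by case: (alpha d \in O); rewrite ?addr0 ?F2_addxx.
Qed.

Definition defect_row : 'rV['F_2]_nH := \row_j parity_defect (ev j).

Lemma defect_row_codiag_mx : defect_row *m codiag_mx = 0.
Proof.
(* Around each vertex the defects add up to its out-degree, which is even. *)
apply/rowP => k; rewrite !mxE; under eq_bigr do rewrite !mxE.
pose at_k x : 'F_2 := (ev k == tail x)%:R.
pose g x := parity_defect x * at_k (ph x).
rewrite (sum_enum_diag_reps (fun x => parity_defect x * (at_k (ph x) + at_k (ph (opp x))))).
rewrite (eq_bigr (fun x => g x + g (opp x))) => [|x _]; last first.
  by rewrite /g parity_defect_opp mulrDr.
rewrite sum_diag_reps (reindex_inj (@perm_inj _ alpha)) /=.
under eq_bigr do rewrite /g /at_k tail_phi alphaK /parity_defect !mulrDl.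
rewrite !big_split /= [X in _ + X](reindex_inj (@perm_inj _ sigma)) /=.
under [X in _ + X]eq_bigr do rewrite phi_alpha_sigma tail_sigma.
rewrite -big_split /= -big_split /=.
under eq_bigr do rewrite -!mulrDl out_parity_alpha.
rewrite -[RHS](sum_outF_vertex (ev k)) [RHS]big_mkcond; apply: eq_bigr => d _.
by rewrite eq_sym; case: (tail d == ev k); rewrite ?mulr1 ?mulr0.
Qed.

Lemma rv_at_eq0 u : (forall x, rv_at u (tail (opp x)) = rv_at u (tail x)) ->
  rv_at u (tail (alpha d0)) = 0 -> rv_at u (tail d0) = 0 -> u = 0.
Proof.
move=> u_opp u_alpha u_s0; apply/rowP => i; rewrite mxE -[i]enum_valK.
have [d <-] := tail_surj (ev i).
pose Y x := rv_at u (tail x).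
have Y_sigma x : Y (sigma x) = Y x by rewrite /Y tail_sigma.
rewrite -[RHS]u_s0; apply: (sigma_opp_invariant_const Y_sigma) => //.
by rewrite /Y u_alpha u_s0.
Qed.

Lemma diag_pole_inj (u : 'rV_nV) : u *m diag_mx = 0 -> u *m pole_mx = 0 -> u = 0.
Proof.
move=> /rowP u_diag /rowP u_pole; apply: rv_at_eq0.
- apply: diag_reps_ind => [x /esym | x x_rep]; first by rewrite oppK.
  apply/esym/F2_add0_eq; have := u_diag (enum_rank_in x_rep x).
  by rewrite mul_diag_mx enum_rankK_in // mxE.
- by have := u_pole 1; rewrite mul_pole_mx mxE.
- by have := u_pole 0; rewrite mul_pole_mx mxE.
Qed.

Lemma codiag_pole_inj (u : 'rV_nV) : u *m codiag_mx^T = 0 -> u *m pole_mx = 0 -> u = 0.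
Proof.
move=> /rowP u_codiag /rowP u_pole; apply: rv_at_eq0.
- suff u_face x : rv_at u (tail (ph (opp x))) = rv_at u (tail (ph x)).
    by move=> y; have := u_face (ph (opp y)); rewrite !oppK.
  move: x; apply: diag_reps_ind => [x /esym | x x_rep]; first by rewrite oppK.
  apply/esym/F2_add0_eq; have := u_codiag (enum_rank_in x_rep x).
  by rewrite mul_codiag_mx_tr enum_rankK_in // mxE.
- by have := u_pole 1; rewrite mul_pole_mx mxE.
- by have := u_pole 0; rewrite mul_pole_mx mxE.
Qed.

Lemma exists_vertex_correction : exists c : 'rV['F_2]_nV,
  [/\ forall x, rv_at c (tail x) + rv_at c (tail (opp x)) = parity_defect x,
      rv_at c (tail d0) = out_parity d0 &
      rv_at c (tail (alpha d0)) = out_parity (ph d0)].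
Proof.
have rk_codiag : (nH + 2 <= nV + \rank codiag_mx)%N.
  have := kernel_inj_rank_ge codiag_pole_inj; rewrite mxrank_tr.
  have := card_diag_reps; have := four_le_card_vertices; rewrite card_darts; lia.
pose t : 'rV_2 := \row_j (if j == 0 then out_parity d0 else out_parity (ph d0)).
have [c [/rowP c_diag /rowP c_pole]] := exact_system_solvable t
  diag_codiag_mx diag_pole_inj rk_codiag defect_row_codiag_mx.
exists c; split.
- apply: diag_reps_ind => [x | x x_rep].
    by rewrite oppK parity_defect_opp addrC.
  by have := c_diag (enum_rank_in x_rep x); rewrite mul_diag_mx !mxE enum_rankK_in.
- by have := c_pole 0; rewrite mul_pole_mx !mxE.
- by have := c_pole 1; rewrite mul_pole_mx !mxE.
Qed.

Lemma exists_labeling_orientation :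
  exists2 lab, strong lab & labeling_orientation lab = O.
Proof.
have [c [c_diag c_s0 c_alpha]] := exists_vertex_correction.
pose lab := [ffun d => rv_at c (tail d) + out_parity d == 1].
have lab_sigma d : lab (sigma d) = lab d (+) (sigma d \in O).
  by rewrite !ffunE tail_sigma out_parity_sigma addrA !F2_eq1D /outF F2_nat_eq1.
have lab_opp d : lab (opp d) = ~~ lab d.
  rewrite !ffunE; set y := rv_at c (tail d) + out_parity d.
  have -> : rv_at c (tail (opp d)) + out_parity (opp d) = 1 + y.
    apply: F2_add0_eq; rewrite -(F2_addxx (parity_defect d)) -{1}c_diag.
    by rewrite /parity_defect /y; ring.
  by rewrite F2_eq1D eqxx.
have lab_d0 : lab d0 = false by rewrite ffunE c_s0 F2_addxx.
have lab_phi_d0 : lab (ph d0) = false by rewrite ffunE tail_phi c_alpha F2_addxx.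
exists lab; first exact: strong_of_local_rules lab_sigma lab_opp lab_d0 lab_phi_d0.
exact: labeling_orientation_of_local_rules.
Qed.

End Construction.

End Quadrangulation.

Lemma exists_bijective_of_inj_surj (A B : Type) (g : B -> A) :
  injective g -> (forall a, exists b, g b = a) -> exists f : A -> B, bijective f.
Proof.
move=> g_inj g_surj.
exists (fun a => proj1_sig (constructive_indefinite_description _ (g_surj a))).
exists g => [a | b]; first by case: constructive_indefinite_description.
by apply: g_inj; case: constructive_indefinite_description.
Qed.

Theorem corollary24 (V D : finType) (tail : D -> V) (alpha sigma : {perm D})
  (d0 : D) (HQ : quadrangulation tail alpha sigma) :
  exists f : two_orientation tail alpha sigma d0 ->
             strong_labeling tail alpha sigma d0,
    bijective f.
Proof.
pose orient (l : strong_labeling tail alpha sigma d0) : two_orientation tail alpha sigma d0 :=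
  exist _ (labeling_orientation sigma (proj1_sig l)) (labeling_orientation_two HQ (proj2_sig l)).
apply: (@exists_bijective_of_inj_surj _ _ orient).
  move=> [l1 strong1] [l2 strong2] /(congr1 (@proj1_sig _ _)) /= eq_orient.
  apply: eq_sig_hprop => [l ? ?|]; first exact: proof_irrelevance.
  exact: labeling_orientation_inj strong1 strong2 eq_orient.
move=> [O O_two]; have [l strong_l orient_l] := exists_labeling_orientation HQ O_two.
exists (exist _ l strong_l); apply: eq_sig_hprop => [? ? ?|]; first exact: proof_irrelevance.
exact: orient_l.
Qed.
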